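(* Let $\rho$ be an involution of $\Lambda_{K3}=II_{3,19}$ with eigenlattices $S=\Lambda_{K3}^{+}$ (hyperbolic, $2$-elementary) and $T=\Lambda_{K3}^{-}$, and let $e\in T$ be primitive isotropic. Put $\Lambda_{ias}=e^\perp/e\cong II_{2,18}$ (perp taken in $\Lambda_{K3}$), with the induced involution $\rho_{ias}$ and eigenlattices $\Lambda_{ias}^{\pm}$, so that $\Lambda_{ias}^-=\bar T:=(e^\perp\cap T)/e$. Then the projection $e^\perp\to\Lambda_{ias}$ embeds $S$ into $\Lambda_{ias}^+$, and: if $e$ has divisibility $1$ in $T$, then $S=\Lambda_{ias}^+$; if $e$ has divisibility $2$ in $T$, then $S$ is a sublattice of index $2$ in $\Lambda_{ias}^+$ containing $(1+\rho_{ias})\Lambda_{ias}=2(\Lambda_{ias}^+)^*$.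
   Context: A lattice $H$ is $2$-elementary if $H^*/H\cong(\mathbb{Z}/2)^a$. The divisibility of $e\in T$ is the positive generator of $e\cdot T$. $II_{p,q}$ denotes the even unimodular lattice of signature $(p,q)$. *)

(* Lattices are Z^n ('rV[int]_n) with an integral Gram matrix. *)
From mathcomp Require Import all_boot all_order all_algebra.
Set Implicit Arguments. Unset Strict Implicit. Unset Printing Implicit Defensive.
Import Order.TTheory GRing.Theory Num.Theory.
Local Open Scope ring_scope.

Definition nK3 : nat := 22.

Section Lattices.
Variable n : nat.
Implicit Types (B rho : 'M[int]_n) (x y e : 'rV[int]_n).

Definition bil B x y : int := (x *m B *m y^T) 0 0.

Definition to_rat_mx (m k : nat) (M : 'M[int]_(m, k)) : 'M[rat]_(m, k) :=
  map_mx (fun z : int => z%:~R) M.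

(* signature (p,q) of a symmetric rational/integral Gram matrix G of size r:
   G is congruent over Q to a diagonal matrix with p positive and q negative
   diagonal entries (well defined by Sylvester's law of inertia). *)
Definition has_signature (r : nat) (G : 'M[int]_r) (p q : nat) : Prop :=
  exists P : 'M[rat]_r, P \in unitmx /\
    let D := P *m to_rat_mx G *m P^T in
    is_diag_mx D /\ #|[set i | 0 < D i i]| = p /\ #|[set i | D i i < 0]| = q.

(* B is the Gram matrix of an even unimodular lattice of signature (p,q),
   i.e. (Z^n, B) is isometric to II_{p,q} *)
Definition even_unimodular_lattice B (p q : nat) : Prop :=
  B^T = B /\ (forall x, (2 %| bil B x x)%Z) /\ `|\det B| = 1 /\
  has_signature B p q.

(* rho is an involutive isometry of (Z^n, B) (acting on row vectors x |-> x rho) *)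
Definition lattice_involution B rho : Prop :=
  rho *m rho = 1%:M /\ rho *m B *m rho^T = B.

Definition eig_plus rho x : bool := x *m rho == x.
Definition eig_minus rho x : bool := x *m rho == - x.

Definition primitive x : Prop :=
  x != 0 /\ forall (k : int) (y : 'rV[int]_n), x = k *: y -> `|k| = 1.

Definition isotropic B x : Prop := bil B x x = 0.

(* divisibility of e in the sublattice T = eig_minus rho:
   d is the positive generator of the ideal e.T *)
Definition divisibility_in_minus B rho e (d : int) : Prop :=
  0 < d /\ (forall t, eig_minus rho t -> (d %| bil B e t)%Z) /\
  exists2 t, eig_minus rho t & bil B e t = d.

Definition eperp B e x : bool := bil B x e == 0.

(* equality in Lambda_ias = e^perp / Z e of the classes of x, y in e^perp *)
Definition eq_mod_e e x y : Prop := exists k : int, x - y = k *: e.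

(* equality in Lambda_ias (x) Q of the classes of x/m and y (x, y in e^perp,
   m > 0): m^-1 x - y lies in Q e *)
Definition eq_mod_Qe e (m : int) x y : Prop :=
  exists2 c : int, c != 0 & exists a : int, c *: (x - m *: y) = a *: e.

(* x in e^perp represents an element of Lambda_ias^+ , the (+1)-eigenlattice
   of the induced involution rho_ias : [x] |-> [x rho] *)
Definition ias_plus rho e x : Prop := eq_mod_e e (x *m rho) x.

Definition sublattice_basis (P : pred 'rV[int]_n) (r : nat) (M : 'M[int]_(r, n)) : Prop :=
  (forall i, P (row i M)) /\ (forall x, P x -> exists c : 'rV[int]_r, x = c *m M) /\
  row_free (to_rat_mx M).

Definition hyperbolic_sublattice B (P : pred 'rV[int]_n) : Prop :=
  exists r (M : 'M[int]_(r.+1, n)),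
    sublattice_basis P M /\ has_signature (M *m B *m M^T) 1 r.

End Lattices.

(* S is orthogonal to the anti-invariant vector e and meets Z e trivially, so it
   embeds in Lambda_ias^+.  A vector x of e^perp represents a class of
   Lambda_ias^+ iff x rho = x + k e for some k, and this class comes from S iff
   k is even (then x + (k/2) e is invariant).  Pairing with t in T gives
   k (e.t) = -2 (x.t), so k is even when e has divisibility 1.  When e has
   divisibility 2, e/2 lies in T^*, which by unimodularity is the projection of
   the whole lattice to T; hence e = x0 - x0 rho, and x0 has k = -1, which gives
   index 2.  The remaining statements are lattice-membership problems for
   integer matrices, decided by the Smith normal form: b/N lies in the row
   lattice of M as soon as (b/N) c is integral for every rational column c
   with M c integral. *)

From mathcomp Require Import all_boot all_order all_algebra zify ring lra.
Set Implicit Arguments. Unset Strict Implicit. Unset Printing Implicit Defensive.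
Import Order.TTheory GRing.Theory Num.Theory.
Local Open Scope ring_scope.

Lemma unitz_norm1 (x : int) : `|x| = 1 -> x \is a GRing.unit.
Proof. by move=> x1; have := eqxx (1 : int); rewrite -{1}x1 eqr_norml => /andP[]. Qed.

Lemma dvdz_all_eq0 (x : int) : (forall q : int, q != 0 -> (q %| x)%Z) -> x = 0.
Proof.
move=> dvdx; apply/eqP; rewrite -absz_eq0; apply/negP => /negP nx0.
have := dvdx (`|x|.+1)%:Z isT; rewrite dvdzE /= => /dvdn_leq.
by rewrite lt0n nx0 ltnn => /(_ isT).
Qed.

Lemma primitive_dvd_scale n (e y : 'rV[int]_n) (q a : int) :
  primitive e -> q != 0 -> q *: y = a *: e -> (q %| a)%Z.
Proof.
move=> [_ prim_e] q0 qy_ae; pose g := gcdz q a.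
have g0 : g != 0 by rewrite gcdz_eq0 negb_and q0.
have [u [v uv]] := Bezoutz q a.
have dq := divzK (dvdz_gcdl q a); have da := divzK (dvdz_gcdr q a).
set q' := (q %/ _)%Z in dq; set a' := (a %/ _)%Z in da.
have uv1 : u * q' + v * a' = 1.
  by apply: (mulIf g0); rewrite mul1r mulrDl -!mulrA dq da.
have q'y : q' *: y = a' *: e.
  by apply: (scalemx_inj g0); rewrite !scalerA !(mulrC g) dq da.
have /prim_e q'1 : e = q' *: (u *: e + v *: y).
  rewrite scalerDr !scalerA (mulrC q' v) -[(v * q') *: y]scalerA q'y scalerA -scalerDl.
  by rewrite mulrC uv1 scale1r.
move: q'1; rewrite -abszE => -[q'1].
by rewrite dvdzE -dq abszM q'1 mul1n -dvdzE dvdz_gcdr.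
Qed.

Section SmithSolvability.
Variables n p : nat.

Definition smith_diag (d : seq int) : 'M[int]_(n, p) :=
  \matrix_(i, j) (d`_i *+ (i == j :> nat)).

Lemma smith_diag_col d (i : 'I_n) (j : 'I_p) : i == j :> nat ->
  smith_diag d *m delta_mx j (0 : 'I_1) = d`_i *: delta_mx i (0 : 'I_1).
Proof.
move=> ij; apply/matrixP => k l; rewrite -colE !mxE ord1 eqxx andbT.
have [->|ki] := eqVneq k i; first by rewrite ij mulr1.
suff -> : (k == j :> nat) = false by rewrite mulr0.
by apply: contraNF ki => kj; apply/eqP/val_inj; rewrite /= (eqP kj) (eqP ij).
Qed.

Lemma smith_diag_col0 d (j : 'I_p) :
  (forall i : 'I_n, i != j :> nat) -> smith_diag d *m delta_mx j (0 : 'I_1) = 0.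
Proof. by move=> no_i; apply/matrixP => k l; rewrite -colE !mxE (negbTE (no_i k)). Qed.

Lemma smith_diag_solvable d (N : int) (b : 'rV[int]_p) :
  (forall j (c : 'cV[int]_n) q,
     smith_diag d *m delta_mx j (0 : 'I_1) = q *: c -> (N * q %| b 0%R j)%Z) ->
  exists y, N *: (y *m smith_diag d) = b.
Proof.
move=> dvd_b.
pose y := \row_(i < n)
  if insub (val i) is Some j then (b 0%R j %/ (N * d`_i))%Z else 0.
exists y; apply/matrixP => i0 j; rewrite ord1 /smith_diag !mxE.
have [i ij|no_i] := pickP (fun i : 'I_n => i == j :> nat); last first.
  rewrite big1 ?mulr0 => [|k _]; last first.
    by rewrite !mxE (no_i k : (k == j :> nat) = false) mulr0.
  apply/esym/eqP; rewrite -dvd0z -(mulr0 N).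
  by apply: (dvd_b j 0); rewrite smith_diag_col0 ?scale0r // => k; rewrite no_i.
rewrite (bigD1 i) //= big1 ?addr0 => [|k ki]; last first.
  rewrite mxE; suff -> : (k == j :> nat) = false by rewrite mulr0.
  by apply: contraNF ki => kj; apply/eqP/val_inj; rewrite /= (eqP kj) (eqP ij).
rewrite !mxE; have -> : insub (val i) = Some j by rewrite (eqP ij : val i = val j) valK.
rewrite ij mulr1n mulrCA divzK //.
by apply: (dvd_b j (delta_mx i (0 : 'I_1))); rewrite (smith_diag_col _ ij).
Qed.

End SmithSolvability.

Lemma int_rowspace_dual n p (M : 'M[int]_(n, p)) (b : 'rV[int]_p) (N : int) :
  (forall (c : 'cV[int]_p) (q : int) (ci : 'cV[int]_n),
     q != 0 -> M *m c = q *: ci -> (N * q %| (b *m c) 0%R 0%R)%Z) ->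
  exists x, N *: (x *m M) = b.
Proof.
move=> dvd_b.
have {}dvd_b (c : 'cV[int]_p) q ci : M *m c = q *: ci -> (N * q %| (b *m c) 0%R 0%R)%Z.
  have [-> Mc0|] := eqVneq q 0; last by move/dvd_b; apply.
  rewrite mulr0 dvd0z scale0r in Mc0 *; apply/eqP/dvdz_all_eq0 => q' q'0.
  apply: dvdz_trans (dvdz_mull N (dvdzz q')) (dvd_b _ _ (0 : 'cV_n) q'0 _).
  by rewrite Mc0 scaler0.
have [L uL [R uR [d _ defM]]] := int_Smith_normal_form M.
have [|y yD] := @smith_diag_solvable n p d N (b *m invmx R).
  move=> j c q Dc.
  have -> : (b *m invmx R) 0 j = (b *m invmx R *m delta_mx j (0 : 'I_1)) 0 0.
    by rewrite -colE [RHS]mxE.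
  rewrite -mulmxA; apply: (dvd_b _ _ (L *m c)).
  by rewrite defM -!mulmxA (mulmxA R) mulmxV // mul1mx Dc scalemxAr.
exists (y *m invmx L).
rewrite defM !mulmxA mulmxKV // scalemxAl.
by move: yD; rewrite /smith_diag => ->; rewrite mulmxKV.
Qed.

Section BilinearForm.
Variables (n : nat) (B : 'M[int]_n).
Implicit Types (x y z : 'rV[int]_n) (k : int).

Lemma bilDl x y z : bil B (x + y) z = bil B x z + bil B y z.
Proof. by rewrite /bil !mulmxDl mxE. Qed.

Lemma bilZl k x z : bil B (k *: x) z = k * bil B x z.
Proof. by rewrite /bil -!scalemxAl mxE. Qed.

Lemma bilNl x z : bil B (- x) z = - bil B x z.
Proof. by rewrite /bil !mulNmx mxE. Qed.

Lemma bilBl x y z : bil B (x - y) z = bil B x z - bil B y z.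
Proof. by rewrite bilDl bilNl. Qed.

Lemma bilDr x y z : bil B z (x + y) = bil B z x + bil B z y.
Proof. by rewrite /bil linearD mulmxDr mxE. Qed.

Lemma bilZr k x z : bil B z (k *: x) = k * bil B z x.
Proof. by rewrite /bil linearZ -scalemxAr mxE. Qed.

Lemma bilNr x z : bil B z (- x) = - bil B z x.
Proof. by rewrite /bil linearN mulmxN mxE. Qed.

Lemma bilBr x y z : bil B z (x - y) = bil B z x - bil B z y.
Proof. by rewrite bilDr bilNr. Qed.

Lemma bilC x y : B^T = B -> bil B x y = bil B y x.
Proof.
move=> Bsym; rewrite /bil -[y *m B *m x^T]trmxK [RHS]mxE.
by rewrite !trmx_mul trmxK Bsym mulmxA.
Qed.

End BilinearForm.

Section Involution.
Variables (n : nat) (B rho : 'M[int]_n).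
Hypotheses (rho_invol : rho *m rho = 1%:M) (rho_isom : rho *m B *m rho^T = B).
Implicit Types (x y s t u : 'rV[int]_n).

Lemma rhoK x : x *m rho *m rho = x.
Proof. by rewrite -mulmxA rho_invol mulmx1. Qed.

Lemma bil_rho x y : bil B (x *m rho) (y *m rho) = bil B x y.
Proof.
by rewrite /bil trmx_mul !mulmxA -(mulmxA _ rho) -(mulmxA _ (rho *m B)) rho_isom.
Qed.

Lemma bil_rho_adj x y : bil B (x *m rho) y = bil B x (y *m rho).
Proof. by rewrite -{1}(rhoK y) bil_rho. Qed.

Lemma rho_mulB_tr u : rho *m (B *m u^T) = B *m (u *m rho)^T.
Proof.
have rhoB : rho *m B = B *m rho^T by rewrite -{1}rho_isom !mulmxA rho_invol mul1mx.
by rewrite mulmxA rhoB trmx_mul mulmxA.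
Qed.

Lemma eig_plus_add_rho x : eig_plus rho (x + x *m rho).
Proof. by rewrite /eig_plus mulmxDl rhoK addrC. Qed.

Lemma eig_minus_sub_rho x : eig_minus rho (x - x *m rho).
Proof. by rewrite /eig_minus mulmxBl rhoK opprB. Qed.

Lemma eig_plus_minus_orth s t : eig_plus rho s -> eig_minus rho t -> bil B s t = 0.
Proof.
move=> /eqP s_plus /eqP t_minus; have := bil_rho s t.
by rewrite s_plus t_minus bilNr; lia.
Qed.

Lemma bil_sub_rho_self x : B^T = B ->
  bil B (x - x *m rho) (x - x *m rho) = 2 * bil B x (x - x *m rho).
Proof.
move=> Bsym; rewrite bilBl !bilBr bil_rho (bilC (x *m rho) x Bsym); lia.
Qed.

End Involution.

Section Unimodular.
Variables (n : nat) (B : 'M[int]_n).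
Hypothesis B_unit : B \in unitmx.

Definition dual_row (c : 'cV[int]_n) : 'rV[int]_n := (invmx B *m c)^T.

Lemma dual_rowK c : B *m (dual_row c)^T = c.
Proof. by rewrite trmxK mulKVmx. Qed.

Lemma dual_row_unique w c : B *m w^T = c -> w = dual_row c.
Proof. by move=> <-; rewrite /dual_row mulKmx // trmxK. Qed.

Lemma dual_rowZ (q : int) c : dual_row (q *: c) = q *: dual_row c.
Proof. by rewrite /dual_row -scalemxAr linearZ. Qed.

Lemma bil_dual_row x c : bil B x (dual_row c) = (x *m c) 0 0.
Proof. by rewrite /bil -mulmxA dual_rowK. Qed.

End Unimodular.

Section UnimodularInvolution.
Variables (n : nat) (B rho : 'M[int]_n).
Hypothesis B_unit : B \in unitmx.
Hypotheses (rho_invol : rho *m rho = 1%:M) (rho_isom : rho *m B *m rho^T = B).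

Lemma sub_rho_preimage t : eig_minus rho t ->
  (forall t', eig_minus rho t' -> (2 %| bil B t t')%Z) ->
  exists x, x - x *m rho = t.
Proof.
move=> t_minus t_even.
have [x <-] : exists x, 1 *: (x *m (1%:M - rho)) = t.
  apply: int_rowspace_dual => c q ci q0 Mc.
  pose u := dual_row B c.
  have u_ci : u - u *m rho = q *: dual_row B ci.
    rewrite -dual_rowZ -Mc; apply: dual_row_unique => //.
    by rewrite linearB /= mulmxBr -rho_mulB_tr // dual_rowK // mulmxBl mul1mx.
  have /t_even/dvdzP[r r_def] : eig_minus rho (dual_row B ci).
    apply/eqP/(scalemx_inj q0); rewrite scalemxAl scalerN -u_ci.
    exact/eqP/eig_minus_sub_rho.
  have : bil B t (u - u *m rho) = 2 * bil B t u.
    by rewrite bilBr -bil_rho_adj // (eqP t_minus) bilNl opprK mulr2n mulrDl mul1r.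
  rewrite u_ci bilZr r_def bil_dual_row // mul1r => qr; apply/dvdzP; exists r; nia.
by exists x; rewrite scale1r mulmxBr mulmx1.
Qed.

End UnimodularInvolution.

Section IsotropicAntiInvariant.
Variables (n : nat) (B rho : 'M[int]_n) (e : 'rV[int]_n).
Hypothesis B_sym : B^T = B.
Hypotheses (rho_invol : rho *m rho = 1%:M) (rho_isom : rho *m B *m rho^T = B).
Hypotheses (e_minus : eig_minus rho e) (e_prim : primitive e) (e_iso : isotropic B e).

Let e_rho : e *m rho = - e := eqP e_minus.
Let e_neq0 : e != 0 := e_prim.1.

Lemma scale_e_inj (a b : int) : a *: e = b *: e -> a = b.
Proof.
move/eqP; rewrite -subr_eq0 -scalerBl scalemx_eq0 (negbTE e_neq0) orbF subr_eq0.
by move/eqP.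
Qed.

Lemma ias_plus_shift x k : x *m rho - x = k *: e -> x *m rho = x + k *: e.
Proof. by move=> <-; rewrite addrC subrK. Qed.

Lemma eq_mod_e_eig_plusP x k : x *m rho - x = k *: e ->
  (exists2 s, eig_plus rho s & eq_mod_e e x s) <-> (2 %| k)%Z.
Proof.
move=> /ias_plus_shift x_rho; split.
  move=> [s /eqP s_plus [j x_s]]; apply/dvdzP; exists (- j).
  have : (x - s) *m rho = - (j *: e) by rewrite x_s -scalemxAl e_rho scalerN.
  rewrite mulmxBl x_rho s_plus addrAC x_s -scalerDl -scaleNr.
  by move=> /scale_e_inj; lia.
move=> /dvdzP[j k_2j]; rewrite {k}k_2j in x_rho; exists (x + j *: e); last first.
  by exists (- j); rewrite opprD addrA subrr add0r scaleNr.
apply/eqP; rewrite mulmxDl x_rho -scalemxAl e_rho scalerN -addrA -scalerBl.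
by congr (x + _ *: e); lia.
Qed.

Lemma eig_plus_eperp s : eig_plus rho s -> eperp B e s.
Proof. by move=> s_plus; rewrite /eperp (eig_plus_minus_orth rho_isom s_plus e_minus). Qed.

Lemma eig_plus_ias_plus s : eig_plus rho s -> ias_plus rho e s.
Proof. by move=> /eqP s_plus; exists 0; rewrite s_plus subrr scale0r. Qed.

Lemma eig_plus_eq_mod_e s1 s2 :
  eig_plus rho s1 -> eig_plus rho s2 -> eq_mod_e e s1 s2 -> s1 = s2.
Proof.
move=> /eqP s1_plus /eqP s2_plus [k s12]; apply/eqP; rewrite -subr_eq0 s12.
have : (s1 - s2) *m rho = (- k) *: e by rewrite s12 -scalemxAl e_rho scalerN scaleNr.
rewrite mulmxBl s1_plus s2_plus s12 => /scale_e_inj k0.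
by rewrite (_ : k = 0) ?scale0r //; lia.
Qed.

Lemma ias_defect_pairing x k t : x *m rho - x = k *: e -> eig_minus rho t ->
  k * bil B e t = - (2 * bil B x t).
Proof.
move=> /ias_plus_shift x_rho /eqP t_rho; have := bil_rho rho_isom x t.
by rewrite x_rho t_rho bilNr bilDl bilZl; lra.
Qed.

Lemma eq_mod_e_eig_plus_div1 x : divisibility_in_minus B rho e 1 ->
  ias_plus rho e x -> exists2 s, eig_plus rho s & eq_mod_e e x s.
Proof.
move=> [_ [_ [t t_minus et1]]] [k x_k]; apply/(eq_mod_e_eig_plusP x_k).
have := ias_defect_pairing x_k t_minus; rewrite et1 mulr1 => ->.
by rewrite rpredN dvdz_mulr.
Qed.

Lemma sub_rho_e_eperp x : x - x *m rho = e -> eperp B e x.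
Proof.
move=> x_e; have := bil_sub_rho_self rho_isom x B_sym.
by rewrite x_e e_iso /eperp bilC //; lra.
Qed.

Lemma ias_plus_index2 x0 : x0 - x0 *m rho = e ->
  [/\ eperp B e x0, ias_plus rho e x0,
      forall s, eig_plus rho s -> ~ eq_mod_e e x0 s &
      forall x, eperp B e x -> ias_plus rho e x ->
        exists2 s, eig_plus rho s & (eq_mod_e e x s \/ eq_mod_e e x (x0 + s))].
Proof.
move=> x0_e; have x0_rho : x0 *m rho - x0 = (-1) *: e by rewrite -x0_e scaleN1r opprB.
split => [||s s_plus x0_s|x _ [k x_k]]; first exact: sub_rho_e_eperp.
- by exists (-1).
- have : exists2 s, eig_plus rho s & eq_mod_e e x0 s by exists s.
  by move/(eq_mod_e_eig_plusP x0_rho).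
have [k_even|k_odd] := boolP (2 %| k)%Z.
  by have [s s_plus x_s] := (eq_mod_e_eig_plusP x_k).2 k_even; exists s => //; left.
have xx0_k : (x - x0) *m rho - (x - x0) = (k + 1) *: e.
  by rewrite mulmxBl opprB addrACA [- _ - _]addrC addrACA x_k x0_e scalerDl scale1r.
have [|s s_plus [j xx0_s]] := (eq_mod_e_eig_plusP xx0_k).2; first by lia.
by exists s => //; right; exists j; rewrite -xx0_s opprD addrA addrAC.
Qed.

Lemma bil_add_rho_ias_plus z w k : eperp B e z -> w *m rho - w = k *: e ->
  bil B (z + z *m rho) w = 2 * bil B z w.
Proof.
move=> /eqP z_perp /ias_plus_shift w_rho.
by rewrite bilDl bil_rho_adj // w_rho bilDr bilZr z_perp; lra.
Qed.

Lemma add_rho_witness u (a q : int) w : q != 0 ->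
  u + u *m rho + a *: e = q *: w -> eperp B e w /\ ias_plus rho e w.
Proof.
move=> q0 uw; have /eqP u_plus := eig_plus_add_rho rho_invol u.
move: (u + _) u_plus uw => p p_plus uw; split.
  have p_perp := eig_plus_minus_orth rho_isom (introT eqP p_plus) e_minus.
  have : bil B (q *: w) e = 0 by rewrite -uw bilDl bilZl e_iso p_perp mulr0 addr0.
  by rewrite bilZl => /eqP; rewrite mulf_eq0 (negbTE q0).
have qw : q *: (w *m rho - w) = (- (a + a)) *: e.
  rewrite scalerBr scalemxAl -uw mulmxDl p_plus -scalemxAl e_rho scalerN.
  by rewrite opprD addrACA subrr add0r -opprD -scalerDl scaleNr.
have /dvdzP[r r_def] := primitive_dvd_scale e_prim q0 qw.
by exists r; apply: (scalemx_inj q0); rewrite qw r_def scalerA mulrC.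
Qed.

Lemma add_rho_dual (N : int) v : B \in unitmx -> N != 0 -> eperp B e v ->
  (forall w, eperp B e w -> ias_plus rho e w -> (N %| bil B v w)%Z) ->
  exists2 z, eperp B e z & N *: (z + z *m rho) = v + v *m rho.
Proof.
move=> B_unit N0 /eqP v_perp v_dual.
have [z] : exists z, N *: (z *m row_mx (1%:M + rho) (B *m e^T)) =
                     row_mx (v + v *m rho) (0 : 'rV[int]_1).
  apply: int_rowspace_dual => c q ci q0.
  rewrite -[c]vsubmxK !mul_row_col mul0mx addr0 [dsubmx c]mx11_scalar mul_mx_scalar.
  rewrite -(dual_rowK B_unit (usubmx c)); set u := dual_row B _; set a := dsubmx c 0 0.
  move=> Mc; have uw : u + u *m rho + a *: e = q *: dual_row B ci.
    rewrite -dual_rowZ // -Mc; apply: dual_row_unique => //.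
    by rewrite !linearD linearZ /= mulmxDl mul1mx rho_mulB_tr // scalemxAr.
  have [w_perp w_plus] := add_rho_witness q0 uw.
  have -> : ((v + v *m rho) *m (B *m u^T)) 0 0 = bil B v (dual_row B ci) * q.
    rewrite mulrC -bilZr -uw !bilDr bilZr v_perp mulr0 addr0 mulmxA.
    by rewrite -/(bil B _ _) bilDl bil_rho_adj.
  by rewrite dvdz_mul2r // v_dual.
rewrite mul_mx_row scale_row_mx => /eq_row_mx[zN_v zN_e].
exists z; last by rewrite mulmxDr mulmx1 in zN_v.
move/eqP: zN_e; rewrite scalemx_eq0 (negbTE N0) /= => /eqP/matrixP/(_ 0 0).
by rewrite mulmxA [RHS]mxE /eperp /bil => ->.
Qed.

Lemma ias_plus_dual_iff (m : int) v : B \in unitmx ->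
  0 < m -> eperp B e v -> ias_plus rho e v ->
  (forall w, eperp B e w -> ias_plus rho e w -> (2 * m %| bil B v w)%Z) <->
  exists2 z, eperp B e z & eq_mod_Qe e m v (z + z *m rho).
Proof.
move=> B_unit m_gt0 v_perp [k v_k]; split.
  move=> /(add_rho_dual B_unit _ v_perp) [|z z_perp zv].
    by rewrite mulf_neq0 ?gt_eqF.
  exists z => //; exists 2 => //; exists (- k).
  rewrite scalerBr scalerA zv (ias_plus_shift v_k) scaleNr.
  by rewrite addrA -mulr2n -scaler_nat opprD addrA subrr add0r.
move=> [z z_perp [c c0 [a zv]]] w w_perp [j w_j].
have := congr1 (fun y => bil B y w) zv.
rewrite /= !bilZl bilBl bilZl (bil_add_rho_ias_plus z_perp w_j).
rewrite (bilC e) // (eqP w_perp).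
move=> /eqP; rewrite mulr0 mulf_eq0 (negbTE c0) subr_eq0 => /eqP ->.
by apply/dvdzP; exists (bil B z w); ring.
Qed.

End IsotropicAntiInvariant.

Theorem lemma5p12 (B rho : 'M[int]_nK3) (e : 'rV[int]_nK3) :
  even_unimodular_lattice B 3 19 ->
  lattice_involution B rho ->
  hyperbolic_sublattice B (eig_plus rho) ->
  eig_minus rho e -> primitive e -> isotropic B e ->
  (* the projection e^perp -> Lambda_ias embeds S into Lambda_ias^+ *)
  ((forall s, eig_plus rho s -> eperp B e s /\ ias_plus rho e s) /\
   (forall s1 s2, eig_plus rho s1 -> eig_plus rho s2 ->
      eq_mod_e e s1 s2 -> s1 = s2)) /\
  (* divisibility 1 : S = Lambda_ias^+ *)
  (divisibility_in_minus B rho e 1 ->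
     forall x, eperp B e x -> ias_plus rho e x ->
       exists2 s, eig_plus rho s & eq_mod_e e x s) /\
  (* divisibility 2 *)
  (divisibility_in_minus B rho e 2 ->
     (* S has index 2 in Lambda_ias^+ *)
     (exists x0, [/\ eperp B e x0, ias_plus rho e x0,
        (forall s, eig_plus rho s -> ~ eq_mod_e e x0 s) &
        (forall x, eperp B e x -> ias_plus rho e x ->
           exists2 s, eig_plus rho s & (eq_mod_e e x s \/ eq_mod_e e x (x0 + s)))])
     /\
     (* S contains (1 + rho_ias) Lambda_ias *)
     (forall z, eperp B e z ->
        exists2 s, eig_plus rho s & eq_mod_e e (z + z *m rho) s)
     /\
     (* (1 + rho_ias) Lambda_ias = 2 (Lambda_ias^+)^* inside Lambda_ias^+ (x) Q;
        an element of Lambda_ias^+ (x) Q is written v/m, v in Lambda_ias^+, m > 0 *)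
     (forall (m : int) v, 0 < m -> eperp B e v -> ias_plus rho e v ->
        ((forall w, eperp B e w -> ias_plus rho e w -> (2 * m %| bil B v w)%Z)
         <-> exists2 z, eperp B e z & eq_mod_Qe e m v (z + z *m rho)))).
Proof.
move=> [B_sym [_ [B_det _]]] [rho_invol rho_isom] _ e_minus e_prim e_iso.
have B_unit : B \in unitmx by rewrite unitmxE unitz_norm1.
split; [split | split].
- move=> s s_plus; split; first exact: (eig_plus_eperp rho_isom e_minus).
  exact: eig_plus_ias_plus.
- exact: (eig_plus_eq_mod_e e_minus e_prim).
- by move=> div1 x _; apply: (eq_mod_e_eig_plus_div1 rho_isom e_minus e_prim).
move=> div2; have [x0 x0_e] : exists x0, x0 - x0 *m rho = e.
  by apply: (sub_rho_preimage B_unit) => //; case: div2 => _ [].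
split.
  by exists x0; apply: (ias_plus_index2 B_sym rho_isom e_minus e_prim e_iso).
split.
  move=> z _; exists (z + z *m rho); first exact: eig_plus_add_rho.
  by exists 0; rewrite subrr scale0r.
move=> m v; exact: (ias_plus_dual_iff B_sym rho_invol rho_isom e_minus e_prim e_iso).
Qed.
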